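(* Let $G_n$, $T$ and $\gamma$ be as in the context, and let $C$ be a directed cycle in $T$, with $|C|$ its number of arcs. Then $|C|$ divides $n+1$. Moreover, for every vertex $u$ of $C$, $u\gamma(u)=l(C)^{\frac{n+1}{|C|}}$, where $l(C)$ is the label of $C$ traversed as a closed walk starting at the out-neighbour of $u$ in $C$ (so that its last arc is the arc of $C$ leaving $u$), and $l(C)^j$ denotes the concatenation of $j$ copies of $l(C)$.
   Context: Let $A$ be a finite alphabet with a linear order $<$, extended to the lexicographic order on words. Let $\mathcal{F}$ be a set of words over $A$ (forbidden words). A word $w$ is in the language if the bi-infinite periodic sequence $\cdots www\cdots$ contains no element of $\mathcal{F}$ as a factor; $W_k$ denotes the set of words of length $k$ in the language. Fix $n\geq 1$ and consider the digraph with vertex set $A^n$ and arcs $(as,sb)$ for $a,b\in A$, $s\in A^{n-1}$, $asb\in W_{n+1}$, the label of $(as,sb)$ being $b$. The de Bruijn graph of span $n$, $G_n$, is a strongly connected component of maximum size of this digraph; vertices are identified with their words (so $u\gamma(u)$ is a word of length $n+1$). The label of a walk is the concatenation of the labels of its arcs. Let $m$ be the vertex of $G_n$ whose word is lexicographically largest. For each vertex $v$, let $e(v)$ be the arc of $G_n$ with tail $v$ having maximum label, and let $\gamma(v)$ be the label of $e(v)$. $T$ is the spanning subgraph of $G_n$ with arc set $\{e(v): v\in V(G_n), v\neq m\}$. *)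

From HB Require Import structures.
From mathcomp Require Import all_boot all_order.
From Stdlib Require Import Relations.
Set Implicit Arguments. Unset Strict Implicit. Unset Printing Implicit Defensive.
Import Order.TTheory.
Local Open Scope order_scope.

Section DeBruijn.
Context {d : Order.disp_t} {A : finOrderType d}.

Fixpoint lex_le (s t : seq A) : bool :=
  match s, t with
  | [::], _ => true
  | _ :: _, [::] => false
  | a :: s', b :: t' => (a < b) || ((a == b) && lex_le s' t')
  end.

(* u is a factor of the bi-infinite periodic sequence ... w w w ... *)
Definition periodic_factor (u w : seq A) : Prop :=
  exists i : nat, forall j : nat, j < size u ->
    onth u j = onth w ((i + j) %% size w).

Definition in_lang (F : seq A -> Prop) (w : seq A) : Prop :=
  0 < size w /\ forall u, F u -> ~ periodic_factor u w.

Definition W (F : seq A -> Prop) (k : nat) (w : seq A) : Prop :=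
  size w = k /\ in_lang F w.

Variable n : nat.
Notation vtx := (n.-tuple A).

(* arc (as, sb) with label b, where v = as, w = sb, and asb in W_{n+1} *)
Definition arcl (F : seq A -> Prop) (v : vtx) (b : A) (w : vtx) : Prop :=
  val w = rcons (behead v) b /\ W F n.+1 (rcons v b).

Definition arc F (v w : vtx) : Prop := exists b, arcl F v b w.

Definition reach F : relation vtx := clos_refl_trans vtx (arc F).

Definition is_scc F (S : {set vtx}) : Prop :=
  (exists x, x \in S) /\
  (forall x y, x \in S -> y \in S -> reach F x y) /\
  (forall x y, x \in S -> reach F x y -> reach F y x -> y \in S).

Definition is_Gn F (S : {set vtx}) : Prop :=
  is_scc F S /\ forall S', is_scc F S' -> #|S'| <= #|S|.

Definition is_max_vertex (S : {set vtx}) (m : vtx) : Prop :=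
  m \in S /\ forall v, v \in S -> lex_le v m.

Definition Tarc F (S : {set vtx}) (m v w : vtx) : Prop :=
  v \in S /\ v <> m /\ w \in S /\
  exists b, arcl F v b w /\
    forall b' w', w' \in S -> arcl F v b' w' -> b' <= b.

(* a directed cycle of T, given by its (distinct) vertices in cyclic order *)
Definition Tcycle F S m (c : seq vtx) : Prop :=
  c != [::] /\ uniq c /\ forall x, x \in c -> Tarc F S m x (next c x).

(* label of the (unique) arc entering vertex w, as a one-letter word:
   the label of (as, sb) is the last letter b of sb *)
Definition lab_word (w : seq A) : seq A :=
  if w is a :: w' then [:: last a w'] else [::].

(* label of the closed walk x_0 -> x_1 -> ... -> x_{k-1} -> x_0 *)
Definition closed_walk_label (x : seq vtx) : seq A :=
  flatten [seq lab_word (val y) | y <- rot 1 x].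

Definition cycle_label_from (c : seq vtx) (u : vtx) : seq A :=
  closed_walk_label (rot (index (next c u) c) c).

End DeBruijn.

(* Index the cycle periodically as C_0, C_1, ... and let gamma_i be the label
   of its arc C_i -> C_(i+1): C_(i+1) is C_i with its first letter dropped and
   gamma_i appended, hence C_(j+n) = gamma_j ... gamma_(j+n-1).  The word
   C_(j+n) gamma_(j+n) is in the language, hence so is its rotation
   C_(j+n+1) gamma_j.  Rotating a word of the language all the way round is a
   closed walk, so this arc leaving C_(j+n+1) stays in G_n, and maximality of
   gamma_(j+n+1) gives gamma_j <= gamma_(j+n+1).  As gamma is |C|-periodic
   this is an equality, so C is also (n+1)-periodic: |C| divides n+1 since the
   vertices of C are distinct, and u gamma(u) is read off as a power of l(C). *)

From Pilot Require Import Defs.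
From mathcomp Require Import all_boot all_order zify.
From Stdlib Require Import Relations.
Import Order.TTheory.

Set Implicit Arguments.
Unset Strict Implicit.

Lemma nth_rot (T : Type) (x0 : T) (s : seq T) r t :
  r <= size s -> t < size s -> nth x0 (rot r s) t = nth x0 s ((r + t) %% size s).
Proof.
move=> hr ht; rewrite nth_cat size_drop; case: ltnP => h.
  by rewrite nth_drop modn_small //; lia.
have -> : r + t = (t - (size s - r)) + size s by lia.
by rewrite modnDr modn_small ?nth_take //; lia.
Qed.

Lemma next_nth_uniq (T : eqType) (x0 : T) (c : seq T) j :
  uniq c -> j < size c -> next c (nth x0 c j) = nth x0 c (j.+1 %% size c).
Proof.
move=> hu hj; rewrite next_nth mem_nth // index_uniq //.
case: c hu hj => [|y p] //= hu hj.
case: (ltnP j.+1 (size p).+1) => h.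
  by rewrite modn_small //; apply: set_nth_default.
have -> : j = size p by lia.
by rewrite modnn /= nth_default.
Qed.

Lemma iotaSr m k : iota m k.+1 = rcons (iota m k) (m + k).
Proof. by rewrite -cats1 -addn1 iotaD. Qed.

Lemma flatten_nseq_map_iota (T : Type) (g : nat -> T) k q :
  (forall t, g (k + t) = g t) ->
  flatten (nseq q [seq g t | t <- iota 0 k]) = [seq g t | t <- iota 0 (q * k)].
Proof.
move=> gk; elim: q => [|q IH] //=.
rewrite IH mulSn iotaD map_cat add0n -[in iota k _](addn0 k) iotaDl addn0.
by congr (_ ++ _); rewrite -map_comp; apply: eq_map => t /=; rewrite gk.
Qed.

Lemma periodic_mul (T : Type) (g : nat -> T) p :
  (forall j, g (j + p) = g j) -> forall q j, g (j + q * p) = g j.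
Proof.
move=> gp; elim=> [|q IH] j; first by rewrite addn0.
by rewrite mulSnr addnA gp IH.
Qed.

Section ShiftMonotone.
Context {disp : Order.disp_t} {T : porderType disp} (g : nat -> T) (p : nat).
Hypothesis g_le_shift : forall j, (g j <= g (j + p))%O.

Lemma le_shift_mul q j : (g j <= g (j + q * p))%O.
Proof.
elim: q => [|q IH]; first by rewrite addn0.
by rewrite mulSnr addnA (le_trans IH).
Qed.

(* A sequence that can only grow along the shift [p] but is periodic must be
   constant along it: going [k - 1] more shifts comes back to [g j]. *)
Lemma periodic_shift_eq k :
  0 < k -> (forall j, g (j + k) = g j) -> forall j, g (j + p) = g j.
Proof.
move=> k_gt0 gk j; apply/le_anti; rewrite g_le_shift andbT.
have := le_shift_mul k.-1 (j + p).
by rewrite -addnA -mulSn prednK // mulnC (periodic_mul gk).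
Qed.

End ShiftMonotone.

Section Language.
Context {d : Order.disp_t} {A : finOrderType d} (F : seq A -> Prop).

Lemma periodic_factor_rot1 (u w : seq A) :
  0 < size w -> periodic_factor u (rot 1 w) -> periodic_factor u w.
Proof.
move=> w_gt0 [i ui]; exists i.+1 => j lt_j; rewrite ui // size_rot !onthE map_rot.
rewrite nth_rot ?size_map //; last by rewrite ltn_pmod.
by rewrite modnDmr add1n addSn.
Qed.

Lemma W_rot1 k (w : seq A) : W F k w -> W F k (rot 1 w).
Proof.
move=> [size_w [w_gt0 noF]]; rewrite /W /in_lang size_rot; do 2!split=> //.
by move=> u /noF nfu /(periodic_factor_rot1 w_gt0).
Qed.

Lemma W_rot k r (w : seq A) : W F k w -> W F k (rot r w).
Proof.
move=> Ww; elim: r => [|r IH]; first by rewrite rot0.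
have [le_r|lt_r] := leqP (r.+1) (size w); last by rewrite rot_oversize // ltnW.
by rewrite -add1n rotD //; apply: W_rot1.
Qed.

Lemma lab_wordE (x0 : A) (s : seq A) : s != [::] -> lab_word s = [:: last x0 s].
Proof. by case: s. Qed.

End Language.

Lemma take_rot1_rcons (T : Type) (p : seq T) b :
  0 < size p -> take (size p) (rot 1 (rcons p b)) = rcons (behead p) b.
Proof.
case: p => [|a q] //= _; rewrite rot1_cons -cats1.
by rewrite -(size_rcons q b) take_size_cat.
Qed.

Section DeBruijnGraph.
Context {d : Order.disp_t} {A : finOrderType d} (F : seq A -> Prop) (n : nat).
Hypothesis n_gt0 : 0 < n.
Implicit Types (v w : n.-tuple A) (x : seq A).

Lemma arc_take_rot1 x v w :
  W F n.+1 x -> val v = take n x -> val w = take n (rot 1 x) -> Defs.arc F v w.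
Proof.
case/lastP: x => [|p b] Wx; first by case: Wx.
have size_p : size p = n by case: Wx; rewrite size_rcons => -[].
have take_p : take n (rcons p b) = p by rewrite -cats1 take_size_cat.
have take_rot_p : take n (rot 1 (rcons p b)) = rcons (behead p) b.
  by rewrite -size_p take_rot1_rcons ?size_p.
rewrite take_p take_rot_p => vE wE; exists b.
by rewrite /arcl wE vE.
Qed.

Lemma reach_take_rot x v w t :
  W F n.+1 x -> val v = take n x -> val w = take n (rot t x) -> reach F v w.
Proof.
move=> Wx vE; elim: t w => [|t IH] w wE.
  have -> : v = w by apply: val_inj; rewrite vE wE rot0.
  exact: rt_refl.
have [size_x _] := Wx.
have [lt_t|ge_t] := ltnP t (size x); last first.
  have -> : v = w by apply: val_inj; rewrite vE wE rot_oversize // ltnW.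
  exact: rt_refl.
have size_u : size (take n (rot t x)) == n by rewrite size_take size_rot size_x ltnSn.
apply: (@rt_trans _ _ _ (Tuple size_u)); first exact: IH.
apply/rt_step/(arc_take_rot1 (W_rot t Wx)) => //.
by rewrite wE -rotD ?add1n.
Qed.

Lemma arcl_reach_back v b w : arcl F v b w -> reach F w v.
Proof.
move=> [wE Wvb]; apply: (reach_take_rot (W_rot1 Wvb) _ (t := n)).
  by rewrite wE -take_rot1_rcons size_tuple.
have size_vb : n.+1 = size (rcons (val v) b) by rewrite size_rcons size_tuple.
rewrite -rotD addn1 size_vb ?rot_size //.
by rewrite -cats1 take_size_cat ?size_tuple.
Qed.

Lemma scc_extend S v b :
  is_scc F S -> v \in S -> W F n.+1 (rcons (val v) b) ->
  exists2 w, w \in S & arcl F v b w.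
Proof.
move=> [_ [_ S_closed]] vS Wvb.
have size_w : size (rcons (behead v) b) == n.
  by rewrite size_rcons size_behead size_tuple prednK.
have vbw : arcl F v b (Tuple size_w) by [].
exists (Tuple size_w) => //; apply: S_closed vS _ (arcl_reach_back vbw).
by apply: rt_step; exists b.
Qed.

End DeBruijnGraph.

Section TreeCycle.
Context {d : Order.disp_t} {A : finOrderType d} (F : seq A -> Prop) (n : nat).
Hypothesis n_gt0 : 0 < n.
Variables (S : {set n.-tuple A}) (m : n.-tuple A) (c : seq (n.-tuple A)).
Hypotheses (S_scc : is_scc F S) (c_cycle : Tcycle F S m c).

(* [C i] is the vertex of the cycle with index [i] modulo [k], and [gamma i]
   is the label of the arc of T leaving it, i.e. the last letter of [C i.+1]. *)
Let k := size c.
Let C i := nth m c (i %% k).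
Let gamma i := last (tnth m (Ordinal n_gt0)) (val (C i.+1)).

Lemma size_cycle_gt0 : 0 < k.
Proof. by rewrite lt0n size_eq0; case: c_cycle. Qed.

Lemma C_in i : C i \in c.
Proof. by rewrite mem_nth // ltn_pmod // size_cycle_gt0. Qed.

Lemma C_addmul i q : C (i + q * k) = C i.
Proof. by rewrite /C addnC modnMDl. Qed.

Lemma next_C i : next c (C i) = C i.+1.
Proof.
have [_ [c_uniq _]] := c_cycle.
by rewrite next_nth_uniq // ?ltn_pmod ?size_cycle_gt0 // -addn1 modnDml addn1.
Qed.

Lemma C_in_S i : C i \in S.
Proof. by have [_ [_ T_c]] := c_cycle; case: (T_c _ (C_in i)). Qed.

Lemma T_arc_C i :
  arcl F (C i) (gamma i) (C i.+1) /\
  forall b w, w \in S -> arcl F (C i) b w -> (b <= gamma i)%O.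
Proof.
have [_ [_ T_c]] := c_cycle.
have [_ [_ [_ [b [[Ci1 Wb] b_max]]]]] := T_c _ (C_in i); rewrite next_C in Ci1 Wb.
by have -> : gamma i = b by rewrite /gamma Ci1 last_rcons.
Qed.

Lemma C_succ i : val (C i.+1) = rcons (behead (val (C i))) (gamma i).
Proof. by have [[]] := T_arc_C i. Qed.

Lemma W_C_gamma i : W F n.+1 (rcons (val (C i)) (gamma i)).
Proof. by have [[]] := T_arc_C i. Qed.

Lemma le_gamma i b : W F n.+1 (rcons (val (C i)) b) -> (b <= gamma i)%O.
Proof.
move=> Wb; have [w wS Ciw] := scc_extend n_gt0 S_scc (C_in_S i) Wb.
by apply: (T_arc_C i).2 Ciw.
Qed.

Lemma C_addn j : val (C (j + n)) = [seq gamma (j + t) | t <- iota 0 n].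
Proof.
suff drop_C s : s <= n ->
    drop (n - s) (val (C (j + s))) = [seq gamma (j + t) | t <- iota 0 s].
  by have := drop_C n (leqnn n); rewrite subnn drop0.
elim: s => [|s IH] lt_s; first by rewrite subn0 drop_oversize ?size_tuple.
rewrite addnS C_succ drop_rcons ?size_behead ?size_tuple; last by lia.
rewrite iotaSr map_rcons -IH 1?ltnW // -drop1 drop_drop.
by congr (rcons (drop _ _) _); lia.
Qed.

Lemma gamma_periodic j : gamma (j + k) = gamma j.
Proof. by rewrite /gamma -addSn -{1}(mul1n k) C_addmul. Qed.

Lemma gamma_le_shift j : (gamma j <= gamma (j + n.+1))%O.
Proof.
rewrite addnS; apply: le_gamma.
have C_head : val (C (j + n)) = gamma j :: behead (val (C (j + n))).
  by rewrite C_addn -(prednK n_gt0) /= addn0.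
by have := W_rot1 (W_C_gamma (j + n)); rewrite C_head rcons_cons rot1_cons -C_succ.
Qed.

Lemma gamma_shift j : gamma (j + n.+1) = gamma j.
Proof. exact: (periodic_shift_eq gamma_le_shift size_cycle_gt0 gamma_periodic). Qed.

Lemma C_letters a : val (C a) = [seq gamma (a.+1 + t) | t <- iota 0 n].
Proof.
have -> : C a = C (a.+1 + k.-1 * n.+1 + n).
  rewrite -(C_addmul a n.+1); congr C; have := size_cycle_gt0; nia.
by rewrite C_addn; apply: eq_map => t; rewrite addnAC (periodic_mul gamma_shift).
Qed.

Lemma C_shift a : C (a + n.+1) = C a.
Proof.
apply: val_inj; rewrite /= !C_letters; apply: eq_map => t.
by rewrite -addSn addnAC gamma_shift.
Qed.

Lemma size_cycle_dvd : k %| n.+1.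
Proof.
have [_ [c_uniq _]] := c_cycle.
have := C_shift 0; rewrite /C add0n mod0n => /eqP.
by rewrite nth_uniq ?ltn_pmod ?size_cycle_gt0.
Qed.

Lemma rot_cycleE r : r <= k -> rot r c = [seq C (r + t) | t <- iota 0 k].
Proof.
move=> le_r; apply: (@eq_from_nth _ m); first by rewrite size_rot size_map size_iota.
move=> t; rewrite size_rot => lt_t.
by rewrite nth_rot // (nth_map 0) ?size_iota // nth_iota.
Qed.

Lemma lab_word_C j : lab_word (val (C j.+1)) = [:: gamma j].
Proof. by rewrite (lab_wordE (tnth m (Ordinal n_gt0))) // -size_eq0 size_tuple -lt0n. Qed.

Lemma cycle_label_from_C i :
  cycle_label_from c (C i) = [seq gamma (i.+1 + t) | t <- iota 0 k].
Proof.
have [_ [c_uniq _]] := c_cycle.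
have lt_i : i.+1 %% k < k by rewrite ltn_pmod ?size_cycle_gt0.
rewrite /cycle_label_from /closed_walk_label next_C index_uniq //.
rewrite -rotD ?add1n // rot_cycleE // -map_comp.
rewrite (eq_map (fun t => lab_word_C (i.+1 %% k + t))) flatten_map1.
by apply: eq_map => t; rewrite /gamma /C -!addSn addSnnS modnDml -addSnnS.
Qed.

Lemma C_gamma_word i :
  val (C i) ++ lab_word (val (C i.+1)) =
  flatten (nseq (n.+1 %/ k) (cycle_label_from c (C i))).
Proof.
rewrite cycle_label_from_C flatten_nseq_map_iota; last first.
  by move=> t; rewrite addnCA addnC gamma_periodic.
rewrite divnK ?size_cycle_dvd // C_letters lab_word_C -(gamma_shift i).
by rewrite iotaSr map_rcons cats1 addnS addSn.
Qed.

End TreeCycle.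

Theorem corollary1 (d : Order.disp_t) (A : finOrderType d) (F : seq A -> Prop)
  (n : nat) (hn : 0 < n) (S : {set n.-tuple A}) (m : n.-tuple A)
  (c : seq (n.-tuple A)) :
  is_Gn F S -> is_max_vertex S m -> Tcycle F S m c ->
  (size c %| n.+1) /\
  forall u, u \in c ->
    (val u) ++ lab_word (val (next c u)) =
    flatten (nseq (n.+1 %/ size c) (cycle_label_from c u)).
Proof.
move=> [S_scc _] _ c_cycle; split; first exact: (size_cycle_dvd hn S_scc c_cycle).
move=> u u_c; have u_C : u = nth m c (index u c %% size c).
  by rewrite modn_small ?index_mem // nth_index.
rewrite u_C (next_C c_cycle); exact: (C_gamma_word hn S_scc c_cycle).
Qed.
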